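(* Assume the standing assumptions below. There exist a constant $\epsilon_b>0$ and a conditional distribution $\bar\pi_{o,b}(o_t,b_t\mid s_t;\theta)$ (for each $s_t\in\mathcal S$ and $\theta\in\Theta$ a probability mass function on $\mathcal O\times\{0,1\}$) such that for all $\theta\in\Theta$ and all $b_t\in\{0,1\}$, $s_t\in\mathcal S$, $o_{t-1},o_t\in\mathcal O$, $$0<\epsilon_b\zeta\,\bar\pi_{o,b}(o_t,b_t\mid s_t;\theta)\le\pi_b(b_t\mid s_t,o_{t-1};\theta_b)\,\bar\pi_{hi}(o_t\mid s_t,o_{t-1},b_t;\theta_{hi})\le\epsilon_b^{-1}|\mathcal O|\,\bar\pi_{o,b}(o_t,b_t\mid s_t;\theta).$$
   Context: $\mathcal S,\mathcal O$ are finite sets; $\Theta=\Theta_{hi}\times\Theta_{lo}\times\Theta_b$ is a convex compact subset of a Euclidean space, $\theta=(\theta_{hi},\theta_{lo},\theta_b)$. $\pi_{hi}(o\mid s;\theta_{hi})$ is a distribution on $\mathcal O$ and $\pi_b(b\mid s,o';\theta_b)$ a distribution on $\{0,1\}$. For a fixed $\zeta\in(0,1)$, $\bar\pi_{hi}(o_t\mid s_t,o_{t-1},b_t;\theta_{hi})$ equals $\pi_{hi}(o_t\mid s_t;\theta_{hi})$ if $b_t=1$, $1-\zeta+\zeta/|\mathcal O|$ if $b_t=0,o_t=o_{t-1}$, and $\zeta/|\mathcal O|$ if $b_t=0,o_t\ne o_{t-1}$. Standing assumptions: there is an open $\tilde\Theta\supseteq\Theta$ on which $\pi_{hi}$ and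 $\pi_b$ (and the low-level policy) are defined, strictly positive, and continuously differentiable in $\theta$ for all other arguments. *)

From HB Require Import structures.
From mathcomp Require Import all_boot all_order all_algebra.
From mathcomp Require Import all_classical all_reals all_analysis.
Set Implicit Arguments. Unset Strict Implicit. Unset Printing Implicit Defensive.
Import Order.TTheory GRing.Theory Num.Theory.
Import numFieldNormedType.Exports.
Local Open Scope classical_set_scope.
Local Open Scope ring_scope.

(* Parameter space: theta = (theta_hi, theta_lo, theta_b) in
   R^nh x R^nl x R^nb, represented as ('rV_nh * 'rV_nl) * 'rV_nb. *)
Definition param (R : realType) (nh nl nb : nat) :=
  ('rV[R]_nh * 'rV[R]_nl * 'rV[R]_nb)%type.

Definition prod3 (R : realType) (nh nl nb : nat)
  (Th : set 'rV[R]_nh) (Tl : set 'rV[R]_nl) (Tb : set 'rV[R]_nb)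
  : set (param R nh nl nb) :=
  [set th | Th th.1.1 /\ Tl th.1.2 /\ Tb th.2].

Definition pconv (R : realType) (nh nl nb : nat) (t : R)
  (x y : param R nh nl nb) : param R nh nl nb :=
  ((t *: x.1.1 + (1 - t) *: y.1.1, t *: x.1.2 + (1 - t) *: y.1.2),
    t *: x.2 + (1 - t) *: y.2).

Definition convex_set3 (R : realType) (nh nl nb : nat)
  (A : set (param R nh nl nb)) : Prop :=
  forall x y t, A x -> A y -> 0 <= t <= 1 -> A (pconv t x y).

Definition C1_on (R : realType) (n : nat) (U : set 'rV[R]_n)
  (f : 'rV[R]_n -> R) : Prop :=
  (forall x, U x -> differentiable f x) /\
  (forall v : 'rV[R]_n, {in U, continuous (fun x => 'D_v f x)}).

Definition is_pmf (R : realType) (T : finType) (p : T -> R) : Prop :=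
  (forall x, 0 <= p x) /\ \sum_(x : T) p x = 1.

Definition pi_hi_bar (R : realType) (S O : finType) (nh : nat)
  (zeta : R) (pi_hi : S -> 'rV[R]_nh -> O -> R)
  (s : S) (o_prev : O) (b : bool) (thh : 'rV[R]_nh) (o : O) : R :=
  if b then pi_hi s thh o
  else if o == o_prev then 1 - zeta + zeta / #|O|%:R
  else zeta / #|O|%:R.

From HB Require Import structures.
From mathcomp Require Import all_boot all_order all_algebra.
From mathcomp Require Import all_classical all_reals all_analysis.
From mathcomp Require Import ring lra.
Set Implicit Arguments. Unset Strict Implicit. Unset Printing Implicit Defensive.
Import Order.TTheory GRing.Theory Num.Theory.
Import numFieldNormedType.Exports.
Local Open Scope classical_set_scope.
Local Open Scope ring_scope.

(* Take for [pi_ob] the law of a fair coin [b] followed by [o ~ pi_hi] if [b]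
   and [o] uniform otherwise; then [2 zeta pi_ob <= pi_hi_bar <= 2 |O| pi_ob].
   A continuous positive function on the compact set Theta is bounded below
   and there are finitely many [(s, o_prev, b)], so [pi_b] takes values in
   [[eps_b, 1]] for some [0 < eps_b <= 1/2].  Multiplying the two sandwiches
   gives the claim. *)

Lemma compact_continuous_lbound {T : topologicalType} {R : realType}
    {A : set T} {f : T -> R} :
  compact A -> {in A, continuous f} -> (forall x, A x -> 0 < f x) ->
  exists2 c : R, 0 < c & forall x, A x -> c <= f x.
Proof.
move=> cA cf fA_gt0; have [->|/set0P A0] := eqVneq A set0; first by exists 1.
have [m Am fm_min] := compact_EVT_min A0 cA (continuous_in_subspaceT cf).
exists (f m); first by apply: fA_gt0; rewrite -inE.
by move=> x Ax; apply: fm_min; rewrite inE.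
Qed.

Lemma compact_continuous_family_lbound {T : topologicalType} {R : realType}
    (I : finType) (A : set T) (f : I -> T -> R) :
  compact A -> (forall i, {in A, continuous (f i)}) ->
  (forall i x, A x -> 0 < f i x) ->
  exists2 c : R, 0 < c & forall i x, A x -> c <= f i x.
Proof.
move=> cA cf fA_gt0.
have /choice[c c_lbound] i : exists c : R, 0 < c /\ forall x, A x -> c <= f i x.
  have [c c_gt0 cf_i] := compact_continuous_lbound cA (cf i) (fA_gt0 i).
  by exists c.
exists (\big[Num.min/1]_i c i).
  by apply/bigmin_gtP; split=> // i _; exact: (c_lbound i).1.
by move=> i x Ax; apply: le_trans ((c_lbound i).2 x Ax); exact: bigmin_le.
Qed.

Lemma C1_on_continuous (R : realType) (n : nat) (U : set 'rV[R]_n) f x :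
  C1_on U f -> U x -> {for x, continuous f}.
Proof. by move=> [df _] Ux; exact: differentiable_continuous (df x Ux). Qed.

Lemma C1_on_continuous_snd (R : realType) (T : topologicalType) (n : nat)
    (U : set 'rV[R]_n) f (x : T * 'rV[R]_n) :
  C1_on U f -> U x.2 -> {for x, continuous (fun y => f y.2)}.
Proof.
move=> C1f Ux; apply: (continuous_comp (f := snd)); first exact: cvg_snd.
exact: C1_on_continuous C1f Ux.
Qed.

Lemma pmf_le1 (R : realType) (T : finType) (p : T -> R) x :
  is_pmf p -> p x <= 1.
Proof.
move=> [p_ge0 <-]; rewrite (bigD1 x) //= lerDl.
by apply: sumr_ge0 => y _; exact: p_ge0.
Qed.

Section CoinMix.
Variables (R : realType) (O : finType).
Implicit Types (p : O -> R) (o : O) (b : bool).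

Definition coin_mix p (ob : O * bool) : R :=
  (if ob.2 then p ob.1 else #|O|%:R^-1) / 2.

Lemma natr_card_gt0 o : 0 < #|O|%:R :> R.
Proof. by rewrite ltr0n; apply/card_gt0P; exists o. Qed.

Lemma coin_mix_pmf p : is_pmf p -> is_pmf (coin_mix p).
Proof.
move=> [p_ge0 p_sum1]; split=> [ob|]; rewrite /coin_mix /=.
  by case: ob => o []; rewrite divr_ge0 // invr_ge0.
have [y _] : exists y : O, true.
  have [y|O0] := pickP (fun _ : O => true); first by exists y.
  by move: p_sum1; rewrite big_pred0 // => /eqP; rewrite eq_sym oner_eq0.
rewrite -(pair_big xpredT xpredT (fun x b => coin_mix p (x, b))) /=.
under eq_bigr => x _ do rewrite big_bool /coin_mix /=.
rewrite big_split /= -!mulr_suml p_sum1 sumr_const eq_cardT // -cardT.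
rewrite -[_ *+ #|O|]mulr_natr.
by rewrite mulVf ?gt_eqF ?(natr_card_gt0 y) //; lra.
Qed.

Lemma coin_mix_gt0 p ob : (forall o, 0 < p o) -> 0 < coin_mix p ob.
Proof.
move: ob => [x b] p_gt0; rewrite /coin_mix divr_gt0 //=.
by case: b => //; rewrite invr_gt0 (natr_card_gt0 x).
Qed.

Lemma pi_hi_bar_bounds (S : finType) (nh : nat) (zeta : R)
    (pi_hi : S -> 'rV[R]_nh -> O -> R) s o_prev b thh o :
  0 < zeta < 1 -> is_pmf (pi_hi s thh) ->
  2 * zeta * coin_mix (pi_hi s thh) (o, b) <=
    pi_hi_bar zeta pi_hi s o_prev b thh o <=
  2 * #|O|%:R * coin_mix (pi_hi s thh) (o, b).
Proof.
move=> /andP[zeta_gt0 zeta_lt1] pmf_hi.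
have n_ge1 : 1 <= #|O|%:R :> R by rewrite ler1n; apply/card_gt0P; exists o.
have n_unit : #|O|%:R * #|O|%:R^-1 = 1 :> R.
  by rewrite mulfV ?gt_eqF ?(natr_card_gt0 o).
have u_gt0 : 0 < #|O|%:R^-1 :> R by rewrite invr_gt0 (natr_card_gt0 o).
have half k v : 2 * k * (v / 2) = k * v :> R by field.
rewrite /pi_hi_bar /coin_mix /= !half.
have p_ge0 := pmf_hi.1 o.
by case: b; [|case: ifP => _]; apply/andP; split; nra.
Qed.

End CoinMix.

Lemma sandwich_mul (R : realFieldType) (e x y z n m : R) :
  0 < e <= 2^-1 -> e <= x <= 1 -> 0 <= z * m -> 2 * z * m <= y <= 2 * n * m ->
  e * z * m <= x * y <= e^-1 * n * m.
Proof.
rewrite -!mulrA; set l := z * m; set u := n * m.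
move=> /andP[e_gt0 e_le] /andP[ex x1] l_ge0 /andP[ly yu].
have einv_ge2 : 2 <= e^-1 by rewrite -[2]invrK lef_pV2 ?posrE //; lra.
have [y_ge0 u_ge0] : 0 <= y /\ 0 <= u by split; lra.
apply/andP; split.
- apply: (@le_trans _ _ (x * l)); first by rewrite ler_wpM2r.
  by rewrite ler_wpM2l //; lra.
- apply: (@le_trans _ _ y); first by rewrite ler_piMl //; lra.
  by apply: le_trans yu _; rewrite ler_wpM2r.
Qed.

Theorem lemma7 (R : realType) (S O : finType) (nh nl nb : nat)
  (Th : set 'rV[R]_nh) (Tl : set 'rV[R]_nl) (Tb : set 'rV[R]_nb)
  (Uh : set 'rV[R]_nh) (Ub : set 'rV[R]_nb)
  (pi_hi : S -> 'rV[R]_nh -> O -> R)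
  (pi_b : S -> O -> 'rV[R]_nb -> bool -> R)
  (zeta : R) :
  compact (prod3 Th Tl Tb) ->
  convex_set3 (prod3 Th Tl Tb) ->
  open Uh -> Th `<=` Uh ->
  open Ub -> Tb `<=` Ub ->
  (forall s th, Uh th -> is_pmf (pi_hi s th)) ->
  (forall s o th, Ub th -> is_pmf (pi_b s o th)) ->
  (forall s th o, Uh th -> 0 < pi_hi s th o) ->
  (forall s o th b, Ub th -> 0 < pi_b s o th b) ->
  (forall s o, C1_on Uh (fun th => pi_hi s th o)) ->
  (forall s o b, C1_on Ub (fun th => pi_b s o th b)) ->
  0 < zeta < 1 ->
  exists eps_b : R, 0 < eps_b /\
  exists pi_ob : S -> param R nh nl nb -> O * bool -> R,
    (forall s th, prod3 Th Tl Tb th -> is_pmf (pi_ob s th)) /\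
    (forall th, prod3 Th Tl Tb th ->
      forall (b : bool) (s : S) (o_prev o : O),
        0 < eps_b * zeta * pi_ob s th (o, b) /\
        eps_b * zeta * pi_ob s th (o, b) <=
          pi_b s o_prev th.2 b * pi_hi_bar zeta pi_hi s o_prev b th.1.1 o /\
        pi_b s o_prev th.2 b * pi_hi_bar zeta pi_hi s o_prev b th.1.1 o <=
          eps_b^-1 * #|O|%:R * pi_ob s th (o, b)).
Proof.
move=> cTheta _ _ ThU _ TbU pmf_hi pmf_b hi_gt0 b_gt0 _ C1_b zeta01.
pose pb (i : S * O * bool) (th : param R nh nl nb) := pi_b i.1.1 i.1.2 th.2 i.2.
have pb_cont i : {in prod3 Th Tl Tb, continuous (pb i)}.
  move=> th /set_mem[_ [_ /TbU Ub_th]].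
  exact: C1_on_continuous_snd (C1_b _ _ _) _.
have pb_gt0 i th : prod3 Th Tl Tb th -> 0 < pb i th.
  by move=> [_ [_ /TbU Ub_th]]; exact: b_gt0.
have [c c_gt0 c_lbound] :=
  compact_continuous_family_lbound (f := pb) cTheta pb_cont pb_gt0.
pose eps := Num.min c 2^-1.
have eps_gt0 : 0 < eps by rewrite lt_min c_gt0 invr_gt0 ltr0n.
exists eps; split=> //.
exists (fun s th => coin_mix (pi_hi s th.1.1)); split.
  by move=> s th [Th_h _]; apply/coin_mix_pmf/pmf_hi/ThU.
move=> th Theta_th b s o_prev o; have Uh_th := ThU _ Theta_th.1.
have pb_bounds : eps <= pi_b s o_prev th.2 b <= 1.
  apply/andP; split.
    by rewrite ge_min (c_lbound (s, o_prev, b) th Theta_th).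
  exact/pmf_le1/pmf_b/TbU/Theta_th.2.2.
have cm_gt0 := coin_mix_gt0 (o, b) (fun o => hi_gt0 s th.1.1 o Uh_th).
have [zeta_gt0 _] := andP zeta01.
split; first by rewrite mulr_gt0 // mulr_gt0.
apply/andP/sandwich_mul => //.
- by rewrite eps_gt0 ge_min lexx orbT.
- by rewrite mulr_ge0 ?ltW.
- by apply: pi_hi_bar_bounds => //; exact: pmf_hi.
Qed.
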